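(* Let $f,g:\mathbb{N}\to\mathbb{N}_0$ be nondecreasing with $\lim_{n\to\infty}f(n)/g(n)=L\in\mathbb{R}$. Then for every $\nu\in\mathbf{Nn}\setminus\mathbb{N}$, $\hat f(\nu)/\hat g(\nu)\approx L$; equivalently, $\hat f(\nu)=L\,\hat g(\nu)+o(\hat g(\nu))$.
   Context: $\mathbb{N}=\{1,2,3,\dots\}$, $\mathbb{N}_0=\mathbb{N}\cup\{0\}$. $\mathbf{No}$ denotes Conway's ordered field of surreal numbers (containing $\mathbb{R}$), $\omega=\{0,1,2,\dots\mid\ \}$ its first infinite element. An omnific integer is a surreal $x$ with $x=\{x-1\mid x+1\}$; $\mathbf{Nn}$ (surnatural numbers) is the class of nonnegative omnific integers, $\mathbb{N}_0\subset\mathbf{Nn}$. For surreals $x,y$, $x\approx y$ means $x-y$ is infinitesimal (smaller in absolute value than every positive real), and $o(z)$ denotes a surreal $w$ with $w/z$ infinitesimal. For $f,g:\mathbb{N}\to\mathbb{N}_0$, $f\overset{\to}{=}g$ means $f(n)=g(n)$ for all $n\ge N$ for some $N$; $f\overset{\to}{<}g$ means $f(n)<g(n)$ for all $n\ge N$ for some $N$. Axiom of Extension (standing assumption): every nondecreasing $f:\mathbb{N}\to\mathbb{N}_0$ has an extension $\hat f:\mathbf{Nn}\to\mathbf{Nn}$ with $\hat f(n)=f(n)$ for $n\in\mathbb{N}$ (constant sequences extend to the same constants, the identity extends to the identity), such that for nondecreasing $f,g$: $f\overset{\to}{=}g\Rightarrow\hat f(\nu)=\hat g(\nu)$ for all $\nu\in\mathbf{Nn}\setminus\mathbb{N}$;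 $f\overset{\to}{<}g\Rightarrow\hat f(\nu)<\hat g(\nu)$ for all $\nu\in\mathbf{Nn}\setminus\mathbb{N}$; and $\widehat{f+g}=\hat f+\hat g$, $\widehat{f\cdot g}=\hat f\cdot\hat g$, $\widehat{f\circ g}=\hat f\circ\hat g$ where defined. *)

From HB Require Import structures.
From mathcomp Require Import all_boot all_order all_algebra.
From mathcomp Require Import all_classical all_reals all_analysis.
Set Implicit Arguments. Unset Strict Implicit. Unset Printing Implicit Defensive.
Import Order.TTheory GRing.Theory Num.Theory.
Local Open Scope ring_scope.

(* Sequences N -> N_0 are modelled as f : nat -> nat; only the values at
   n >= 1 (i.e. n in N = {1,2,...}) are ever used. *)

Definition nondecr (f : nat -> nat) : Prop :=
  forall m n : nat, (1 <= m)%N -> (m <= n)%N -> (f m <= f n)%N.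

Definition ev_eq (f g : nat -> nat) : Prop :=
  exists N : nat, forall n : nat, (N <= n)%N -> f n = g n.

Definition ev_lt (f g : nat -> nat) : Prop :=
  exists N : nat, forall n : nat, (N <= n)%N -> (f n < g n)%N.

(* The Axiom of Extension, for an ordered field S (playing the role of No)
   with a class Nn of surnatural numbers and an extension operator
   ext : f |-> \hat f.  "Nn \ N" is the set of surnaturals that are not
   natural numbers. *)
Definition not_nat (S : numDomainType) (x : S) : Prop :=
  forall n : nat, x <> n%:R.

Definition surnat_extension (S : realFieldType) (Nn : pred S)
    (ext : (nat -> nat) -> S -> S) : Prop :=
  (forall n : nat, Nn n%:R) /\
  (forall x, Nn x -> 0 <= x) /\
  (forall f, nondecr f -> forall x, Nn x -> Nn (ext f x)) /\
  (forall f, nondecr f -> forall n : nat, (1 <= n)%N -> ext f n%:R = (f n)%:R) /\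
  (forall c : nat, forall x, Nn x -> ext (fun _ => c) x = c%:R) /\
  (forall x, Nn x -> ext (fun n => n) x = x) /\
  (forall f g, nondecr f -> nondecr g -> ev_eq f g ->
     forall x, Nn x -> not_nat x -> ext f x = ext g x) /\
  (forall f g, nondecr f -> nondecr g -> ev_lt f g ->
     forall x, Nn x -> not_nat x -> ext f x < ext g x) /\
  (forall f g, nondecr f -> nondecr g ->
     forall x, Nn x -> ext (fun n => f n + g n)%N x = ext f x + ext g x) /\
  (forall f g, nondecr f -> nondecr g ->
     forall x, Nn x -> ext (fun n => f n * g n)%N x = ext f x * ext g x) /\
  (forall f g, nondecr f -> nondecr g ->
     (forall n, (1 <= n)%N -> (1 <= g n)%N) ->
     forall x, Nn x -> ext (fun n => f (g n)) x = ext f (ext g x)).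

Definition infinitesimal (R : realType) (S : realFieldType)
    (emb : R -> S) (x : S) : Prop :=
  forall e : R, 0 < e -> `|x| < emb e.

Definition little_o (R : realType) (S : realFieldType)
    (emb : R -> S) (w z : S) : Prop :=
  infinitesimal emb (w / z).

From HB Require Import structures.
From mathcomp Require Import all_boot all_order all_algebra.
From mathcomp Require Import all_classical all_reals all_analysis.
From mathcomp Require Import lra.
Set Implicit Arguments. Unset Strict Implicit. Unset Printing Implicit Defensive.
Import Order.TTheory GRing.Theory Num.Theory numFieldNormedType.Exports.
Local Open Scope classical_set_scope.
Local Open Scope ring_scope.

(* For every rational p/q < L the real limit gives p g(n) < q f(n) eventually;
   the Axiom of Extension transfers this to p \hat g(nu) < q \hat f(nu), and
   symmetrically for p/q > L.  Squeezing \hat f(nu)/\hat g(nu) between such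
   rationals on both sides of L within any real e > 0 shows that it differs
   from L by an infinitesimal. *)

Lemma natr_ratio_between (R : realType) (a b : R) : 0 <= a -> a < b ->
  exists p q : nat, (0 < q)%N /\ a < p%:R / q%:R < b.
Proof.
move=> a_ge0 ab; have ba_gt0 : 0 < b - a by rewrite subr_gt0.
set q := (Num.truncn (b - a)^-1).+1; set p := (Num.truncn (a * q%:R)).+1.
have q_gt0 : 0 < q%:R :> R by rewrite ltr0n.
have gap : 1 < (b - a) * q%:R.
  by rewrite -ltr_pdivrMl // mulr1 truncnS_gt.
have ap : a * q%:R < p%:R by apply: truncnS_gt.
have pb : p%:R <= a * q%:R + 1.
  by rewrite /p -addn1 natrD lerD2r truncn_le mulr_ge0.
exists p, q; split=> //; rewrite ltr_pdivrMr // ltr_pdivlMr // ap /=.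
by apply: le_lt_trans pb _; rewrite -ltrBrDl -mulrBl.
Qed.

Lemma nondecr_scale (a : nat) (h : nat -> nat) :
  nondecr h -> nondecr (fun n => a * h n)%N.
Proof. by move=> hh m n m1 mn; rewrite leq_mul2l hh ?orbT. Qed.

Lemma nondecr_zero_or_eventually_pos (h : nat -> nat) : nondecr h ->
  (forall n, (1 <= n)%N -> h n = 0%N) \/ \forall n \near \oo, (0 < h n)%N.
Proof.
move=> hh; have [[n0 [n0_ge1 h_pos]]|] :=
  pselect (exists n0, (1 <= n0)%N /\ (0 < h n0)%N).
  by right; exists n0 => // n /= n0n; apply: leq_trans h_pos (hh _ _ n0_ge1 n0n).
move=> no_pos; left => n n_ge1; apply/eqP; rewrite -leqn0 leqNgt.
by apply/negP => h_pos; apply: no_pos; exists n.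
Qed.

Lemma ev_lt_near (f g : nat -> nat) :
  (\forall n \near \oo, (f n < g n)%N) -> ev_lt f g.
Proof. by move=> [N _ fg]; exists N. Qed.

Section RatioLimit.
Variables (R : realType) (f g : nat -> nat) (L : R).
Hypothesis ratio_cvg : (fun n => (f n)%:R / (g n)%:R : R) @ \oo --> L.

Lemma ratio_lim_ge0 : 0 <= L.
Proof.
rewrite -(cvg_lim _ ratio_cvg) //; apply: limr_ge; first exact: cvgP ratio_cvg.
by near=> n; rewrite divr_ge0.
Unshelve. all: by end_near.
Qed.

Lemma ratio_lim_zero : (forall n, (1 <= n)%N -> g n = 0%N) -> L = 0.
Proof.
move=> g0; apply: cvg_unique ratio_cvg _ => //; apply: cvg_near_cst.
by near=> n; rewrite g0 ?invr0 ?mulr0 //; near: n; exists 1%N.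
Unshelve. all: by end_near.
Qed.

Hypothesis g_pos : \forall n \near \oo, (0 < g n)%N.

Lemma ev_lt_below_ratio_lim (p q : nat) : (0 < q)%N -> p%:R / q%:R < L ->
  ev_lt (fun n => p * g n)%N (fun n => q * f n)%N.
Proof.
move=> q_gt0 pqL; apply: ev_lt_near; near=> n.
have gn_gt0 : 0 < (g n)%:R :> R by rewrite ltr0n; near: n.
have : p%:R / q%:R < (f n)%:R / (g n)%:R :> R.
  by near: n; exact: cvgr_gt ratio_cvg _ pqL.
rewrite ltr_pdivlMr // mulrAC ltr_pdivrMr ?ltr0n //.
by rewrite -!natrM ltr_nat mulnC [(q * _)%N]mulnC.
Unshelve. all: by end_near.
Qed.

Lemma ev_lt_above_ratio_lim (p q : nat) : (0 < q)%N -> L < p%:R / q%:R ->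
  ev_lt (fun n => q * f n)%N (fun n => p * g n)%N.
Proof.
move=> q_gt0 Lpq; apply: ev_lt_near; near=> n.
have gn_gt0 : 0 < (g n)%:R :> R by rewrite ltr0n; near: n.
have : (f n)%:R / (g n)%:R < p%:R / q%:R :> R.
  by near: n; exact: cvgr_lt ratio_cvg _ Lpq.
rewrite ltr_pdivrMr // mulrAC ltr_pdivlMr ?ltr0n //.
by rewrite -!natrM ltr_nat mulnC.
Unshelve. all: by end_near.
Qed.

End RatioLimit.

Section Extension.
Variables (S : realFieldType) (Nn : pred S) (ext : (nat -> nat) -> S -> S).
Hypothesis ext_ax : surnat_extension Nn ext.
Variable nu : S.
Hypotheses (Nn_nu : Nn nu) (nu_not_nat : not_nat nu).

Lemma ext_ge0 (h : nat -> nat) : nondecr h -> 0 <= ext h nu.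
Proof.
by case: ext_ax => _ [Nn_ge0 [ext_Nn _]] hh; apply/Nn_ge0/ext_Nn.
Qed.

Lemma ext_scale (a : nat) (h : nat -> nat) : nondecr h ->
  ext (fun n => a * h n)%N nu = a%:R * ext h nu.
Proof.
case: ext_ax => _ [_ [_ [_ [ext_cst [_ [_ [_ [_ [ext_mul _]]]]]]]]] hh.
by rewrite (ext_mul (fun=> a)) ?ext_cst.
Qed.

Lemma ext_lt_scale (a b : nat) (h1 h2 : nat -> nat) :
  nondecr h1 -> nondecr h2 ->
  ev_lt (fun n => a * h1 n)%N (fun n => b * h2 n)%N ->
  a%:R * ext h1 nu < b%:R * ext h2 nu.
Proof.
case: ext_ax => _ [_ [_ [_ [_ [_ [_ [ext_lt _]]]]]]] h1h h2h lt12.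
by rewrite -!ext_scale //; apply: ext_lt => //; apply: nondecr_scale.
Qed.

Lemma ext_gt0 (h : nat -> nat) : nondecr h ->
  (\forall n \near \oo, (0 < h n)%N) -> 0 < ext h nu.
Proof.
move=> hh h_pos; have := ext_lt_scale (a:=0) (b:=1) hh hh; rewrite mul0r mul1r.
by apply; apply: ev_lt_near; near=> n; rewrite mul0n mul1n; near: n.
Unshelve. all: by end_near.
Qed.

Lemma ext_zero (h : nat -> nat) : nondecr h ->
  (forall n, (1 <= n)%N -> h n = 0%N) -> ext h nu = 0.
Proof.
case: ext_ax => _ [_ [_ [_ [ext_cst [_ [ext_eq _]]]]]] hh h0.
rewrite (ext_eq _ (fun=> 0%N)) ?ext_cst //; exists 1%N => n; exact: h0.
Qed.

End Extension.

Section Infinitesimal.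
Variables (R : realType) (S : realFieldType) (emb : {rmorphism R -> S}).

Lemma infinitesimal0 : {homo emb : x y / x < y} -> infinitesimal emb 0.
Proof. by move=> emb_lt e e_gt0; rewrite normr0 -(rmorph0 emb) emb_lt. Qed.

Lemma little_o_infinitesimal_ratio (x y l : S) :
  infinitesimal emb (x / y - l) -> little_o emb (x - l * y) y.
Proof.
have [->|y_neq0] := eqVneq y 0.
  move=> xl_inf e e_gt0; rewrite invr0 mulr0 normr0.
  exact: le_lt_trans (normr_ge0 _) (xl_inf e e_gt0).
by rewrite /little_o mulrBl -mulrA divff ?mulr1.
Qed.

Lemma infinitesimal_sub_ratio_squeeze (x : S) (L : R) :
  {homo emb : a b / a < b} -> 0 <= x -> 0 <= L ->
  (forall p q : nat, (0 < q)%N -> p%:R / q%:R < L -> p%:R / q%:R < x) ->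
  (forall p q : nat, (0 < q)%N -> L < p%:R / q%:R -> x < p%:R / q%:R) ->
  infinitesimal emb (x - emb L).
Proof.
move=> emb_lt x_ge0 L_ge0 below above e e_gt0.
have emb_ratio (p q : nat) : emb (p%:R / q%:R) = p%:R / q%:R.
  by rewrite fmorph_div !rmorph_nat.
have lower : emb (L - e) < x.
  have [Le_lt0|Le_ge0] := ltP (L - e) 0.
    by apply: lt_le_trans (emb_lt _ _ Le_lt0) _; rewrite rmorph0.
  have Le_lt_L : L - e < L by rewrite gtrBl.
  have [p [q [q_gt0 /andP[Le_pq pq_L]]]] := natr_ratio_between Le_ge0 Le_lt_L.
  by apply: lt_trans (below _ _ q_gt0 pq_L); rewrite -emb_ratio emb_lt.
have upper : x < emb (L + e).
  have L_lt_Le : L < L + e by rewrite ltrDl.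
  have [p [q [q_gt0 /andP[L_pq pq_Le]]]] := natr_ratio_between L_ge0 L_lt_Le.
  by apply: lt_trans (above _ _ q_gt0 L_pq) _; rewrite -emb_ratio emb_lt.
rewrite rmorphB in lower; rewrite rmorphD in upper.
by rewrite ltr_norml; apply/andP; split; lra.
Qed.

End Infinitesimal.

Theorem lemma6p6 (R : realType) (S : realFieldType)
    (emb : {rmorphism R -> S}) (Nn : pred S)
    (ext : (nat -> nat) -> S -> S) :
  (forall x y : R, x <= y -> emb x <= emb y) ->
  surnat_extension Nn ext ->
  forall (f g : nat -> nat) (L : R),
    nondecr f -> nondecr g ->
    (fun n : nat => ((f n)%:R / (g n)%:R : R)) @ \oo --> L ->
    forall nu : S, Nn nu -> not_nat nu ->
      infinitesimal emb (ext f nu / ext g nu - emb L) /\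
      exists w : S, ext f nu = emb L * ext g nu + w /\
                    little_o emb w (ext g nu).
Proof.
move=> emb_le ext_ax f g L fh gh ratio_cvg nu Nn_nu nu_not_nat.
have emb_lt := inj_homo_lt (fmorph_inj emb) emb_le.
suff ratio_inf : infinitesimal emb (ext f nu / ext g nu - emb L).
  split=> //; exists (ext f nu - emb L * ext g nu).
  by split; [rewrite addrC subrK | apply: little_o_infinitesimal_ratio].
have [g0|g_pos] := nondecr_zero_or_eventually_pos gh.
  rewrite (ext_zero ext_ax Nn_nu nu_not_nat gh g0) (ratio_lim_zero ratio_cvg g0).
  by rewrite invr0 mulr0 rmorph0 subr0; apply: infinitesimal0.
have G_gt0 := ext_gt0 ext_ax Nn_nu nu_not_nat gh g_pos.
apply: infinitesimal_sub_ratio_squeeze => //.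
- exact: divr_ge0 (ext_ge0 ext_ax Nn_nu fh) (ltW G_gt0).
- exact: ratio_lim_ge0 ratio_cvg.
- move=> p q q_gt0 pqL; rewrite ltr_pdivrMr ?ltr0n // mulrAC ltr_pdivlMr //.
  rewrite [_ * q%:R]mulrC; apply: (ext_lt_scale ext_ax Nn_nu nu_not_nat gh fh).
  exact (ev_lt_below_ratio_lim ratio_cvg g_pos q_gt0 pqL).
- move=> p q q_gt0 Lpq; rewrite ltr_pdivlMr ?ltr0n // mulrAC ltr_pdivrMr //.
  rewrite mulrC; apply: (ext_lt_scale ext_ax Nn_nu nu_not_nat fh gh).
  exact (ev_lt_above_ratio_lim ratio_cvg g_pos q_gt0 Lpq).
Qed.
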